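(* Suppose that OnlinePacker (described in the context) has packed n horizontal parallelograms of height 1 and width at most 1. If the total area of the pieces is at least 1, the resulting packing has density Ω(n^{1-log 3}/log n), where log is base 2.
   Context: Setting: online translational strip packing. The strip is a horizontal strip of height 1, bounded on the left by a vertical segment and unbounded to the right. Pieces arrive one at a time, each must be placed by a translation only, interior-disjoint from previously placed pieces, before the next piece is revealed. The occupied part of the strip is the part from its left end to the vertical line through the rightmost point of a placed piece; density is total piece area divided by the area of the occupied part. Here all pieces are horizontal parallelograms (parallelograms with a pair of horizontal edges) of height 1 and width at most 1. Box types: these form an infinite ternary tree. The root, the basic box type, is a 2 x 1 rectangle. A d-dimensional box type is a vector [x_1,...,x_d] in {-1,0,+1}^d and is a horizontal parallelogram of height 1. Given type T with bottom edge b and top edge t, split b into three equal consecutive segments b_{-1}, b_0, b_{+1} and t likewise into t_{-1}, t_0, t_{+1}; the child type T ⊕ [x_{d+1}] is the parallelogram spanned by b_0 and t_{x_{d+1}}. Thus a d-dimensional type has base edges of length 2·3^{-d}. A box type T matches a piece P if P can be packed into T and area(T) ≤ 6·area(P). A type is suitable for P if it is an ancestor (including itself) of a type matching P. Algorithm OnlinePacker: each allocated box of type T contains either a single piece that T matches, or one, two or three boxes whose types are children of T. When a piece P arrives: if there is an allocated box B_1 whose type T_1 is suitable for P (with T_1,...,T_k the tree path from T_1 to a type T_k matching P) and B_1 has room for one more box of type T_2, choose such B_1 of maximum dimension; then for i = 1,...,k-1 allocate in B_i a new box B_{i+1} of type T_{i+1}, as far left in B_i as possible, and place P in B_k. Otherwise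 allocate a new basic box as far left in the strip as possible, call it B_1, and proceed the same way. A d-dimensional box is near-empty if exactly one (d+1)-dimensional box is allocated in it (near-empty boxes may be present here). *)

From Stdlib Require Import Reals Lra List.
Import ListNotations.
Open Scope R_scope.

(* Geometry.  The strip is [0, +oo) x [0,1].  Every object we handle is *)
(* a horizontal parallelogram of height 1 lying in the strip, hence it  *)
(* spans the full height [0,1] and is determined by its bottom-left x   *)
(* coordinate [pleft], the length [plen] of its two horizontal edges,   *)
(* and its shear [pshear] (top-left x minus bottom-left x):             *)
(*   bottom edge [pleft, pleft+plen] x {0},                             *)
(*   top edge    [pleft+pshear, pleft+pshear+plen] x {1}.               *)
Record para := mkPara { pleft : R; plen : R; pshear : R }.

Definition in_region (A : para) (x y : R) : Prop :=
  0 <= y <= 1 /\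
  pleft A + y * pshear A <= x <= pleft A + y * pshear A + plen A.

Definition in_interior (A : para) (x y : R) : Prop :=
  0 < y < 1 /\
  pleft A + y * pshear A < x < pleft A + y * pshear A + plen A.

Definition contained (A B : para) : Prop :=
  forall x y, in_region A x y -> in_region B x y.

Definition int_disjoint (A B : para) : Prop :=
  forall x y, ~ (in_interior A x y /\ in_interior B x y).

Definition in_strip (A : para) : Prop :=
  forall x y, in_region A x y -> 0 <= x.

Definition rightmost (A : para) : R := pleft A + plen A + Rmax 0 (pshear A).

(* Pieces: horizontal parallelograms of height 1 (given up to           *)
(* translation), width (= horizontal extent) at most 1.                 *)
Record piece := mkPiece { wlen : R; wshear : R }.

Definition piece_width (P : piece) : R := wlen P + Rabs (wshear P).
Definition admissible (P : piece) : Prop := 0 < wlen P /\ piece_width P <= 1.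
Definition piece_area (P : piece) : R := wlen P. (* height 1 *)

Definition piece_at (P : piece) (q : R) : para := mkPara q (wlen P) (wshear P).

Inductive sgn := SM | S0 | SP.
Definition sval (s : sgn) : R := match s with SM => -1 | S0 => 0 | SP => 1 end.
Definition btype := list sgn.

(* (base edge length, shear) of a type: the root is a 2 x 1 rectangle;
   the child T (+) [x] is spanned by the middle third b_0 of the bottom
   edge of T and the third t_x of its top edge. *)
Definition type_geom (T : btype) : R * R :=
  fold_left (fun (Ls : R * R) (x : sgn) =>
               let (L, s) := Ls in (L / 3, s + (sval x + 1) * (L / 3) - L / 3))
            T (2, 0).

Definition type_at (T : btype) (t : R) : para :=
  mkPara t (fst (type_geom T)) (snd (type_geom T)).

Definition type_area (T : btype) : R := fst (type_geom T). (* height 1 *)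

Definition matches (T : btype) (P : piece) : Prop :=
  (exists q, contained (piece_at P q) (type_at T 0)) /\
  type_area T <= 6 * piece_area P.

Record box := mkBox { bty : btype; bpos : R; bparent : option nat }.

Record state := mkState {
  boxes : list box;                    (* allocated boxes, by index *)
  placed : list (piece * R * nat)      (* piece, x-offset, index of its box *)
}.

Definition empty_state : state := mkState [] [].

Definition box_region (B : box) : para := type_at (bty B) (bpos B).

Definition has_piece (st : state) (i : nat) : Prop :=
  exists e, In e (placed st) /\ snd e = i.

Definition child_ok (st : state) (i : nat) (T : btype) (t : R) : Prop :=
  exists B, nth_error (boxes st) i = Some B /\
    contained (type_at T t) (box_region B) /\
    forall c, In c (boxes st) -> bparent c = Some i ->
      int_disjoint (type_at T t) (box_region c).

Definition room (st : state) (i : nat) (T : btype) : Prop :=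
  ~ has_piece st i /\ exists t, child_ok st i T t.

Definition basic_ok (st : state) (t : R) : Prop :=
  in_strip (type_at [] t) /\
  forall c, In c (boxes st) -> int_disjoint (type_at [] t) (box_region c).

Definition leftmost (F : R -> Prop) (t : R) : Prop :=
  F t /\ forall t', F t' -> t <= t'.

(* Allocated box i (of type T_1 = bty B) is suitable for P via the path
   T_1, T_2 = T_1 ++ [x], ..., T_k = T_1 ++ x :: ys matching P, and B
   has room for one more box of type T_2. *)
Definition candidate (st : state) (P : piece) (i : nat) (x : sgn) (ys : list sgn) : Prop :=
  exists B, nth_error (boxes st) i = Some B /\
    matches (bty B ++ x :: ys) P /\ room st i (bty B ++ [x]).

Definition dim_of (st : state) (i : nat) : nat :=
  match nth_error (boxes st) i with Some B => length (bty B) | None => 0%nat end.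

Inductive build : state -> nat -> list sgn -> piece -> state -> Prop :=
| build_place : forall st i B P q,
    nth_error (boxes st) i = Some B ->
    contained (piece_at P q) (box_region B) ->
    build st i [] P (mkState (boxes st) (placed st ++ [(P, q, i)]))
| build_box : forall st i B x xs P t st',
    nth_error (boxes st) i = Some B ->
    leftmost (child_ok st i (bty B ++ [x])) t ->
    build (mkState (boxes st ++ [mkBox (bty B ++ [x]) t (Some i)]) (placed st))
          (length (boxes st)) xs P st' ->
    build st i (x :: xs) P st'.

(* One step of OnlinePacker (all tie-breaks allowed). *)
Inductive step : state -> piece -> state -> Prop :=
| step_existing : forall st P i x ys st',
    candidate st P i x ys ->
    (forall j y zs, candidate st P j y zs -> (dim_of st j <= dim_of st i)%nat) ->
    build st i (x :: ys) P st' ->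
    step st P st'
| step_new : forall st P t xs st',
    (~ exists j y zs, candidate st P j y zs) ->
    leftmost (basic_ok st) t ->
    matches xs P ->
    build (mkState (boxes st ++ [mkBox [] t None]) (placed st))
          (length (boxes st)) xs P st' ->
    step st P st'.

Inductive runs : list piece -> state -> Prop :=
| runs_nil : runs [] empty_state
| runs_snoc : forall Ps P st st',
    runs Ps st -> step st P st' -> runs (Ps ++ [P]) st'.

Definition total_area (Ps : list piece) : R :=
  fold_right Rplus 0 (map piece_area Ps).

Definition occupied_length (st : state) : R :=
  fold_right Rmax 0
    (map (fun e : piece * R * nat => let '(P, q, _) := e in rightmost (piece_at P q))
         (placed st)).

Definition density (st : state) : R :=
  fold_right Rplus 0
    (map (fun e : piece * R * nat => let '(P, _, _) := e in piece_area P) (placed st))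
  / (occupied_length st * 1).

Definition log2 (x : R) : R := ln x / ln 2.

From Pilot Require Import Defs.
From Stdlib Require Import Reals List Lia Lra Psatz Arith.
Import ListNotations.
Open Scope R_scope.

(* Let [N_j] be the number of allocated boxes of dimension [j].  A box of
   dimension [j] holds a piece, is near-empty, or has at least two children.
   Since OnlinePacker always extends the deepest suitable box, two near-empty
   boxes never have children of the same type, so at most [3^(j+1)] boxes of
   dimension [j] are near-empty; and a box of dimension [j] holding a piece
   certifies area at least [3^-j / 3].  Hence
     [2 N_j <= N_(j+1) + 3^(j+1) + 2 L_j]
   with [L_j] the number of pieces in boxes of dimension [j].  Unrolled up to
   [J = floor (log2 n)], where [N_J <= n], this gives [N_0 <= 6 (3/2)^J A]
   for total area [A >= 1].  The occupied length is at most [2 N_0] and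
   [(3/2)^J <= n^(log2 3 - 1)], so the density is at least
   [n^(1 - log2 3) / 12]. *)

(** * Geometry of parallelograms and box types *)

Lemma interior_in_region (A : para) x y : in_interior A x y -> in_region A x y.
Proof. unfold in_interior, in_region; lra. Qed.

Lemma int_disjoint_sym (A B : para) : int_disjoint A B -> int_disjoint B A.
Proof. intros H x y [HA HB]. exact (H x y (conj HB HA)). Qed.

Lemma int_disjoint_adjacent u l s : int_disjoint (mkPara u l s) (mkPara (u + l) l s).
Proof. intros x y [[_ H1] [_ H2]]; simpl in *; lra. Qed.

Lemma rightmost_in_region (A : para) : 0 <= plen A -> exists y, in_region A (rightmost A) y.
Proof.
  intros Hl; unfold rightmost, in_region.
  destruct (Rle_dec 0 (pshear A)).
  - exists 1; rewrite Rmax_right by lra; lra.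
  - exists 0; rewrite Rmax_left by lra; lra.
Qed.

(* The converse holds because every horizontal section interpolates
   linearly between the bottom and the top edge. *)
Lemma contained_iff_corners (A B : para) : 0 <= plen A ->
  contained A B <->
  pleft B <= pleft A /\ pleft A + plen A <= pleft B + plen B /\
  pleft B + pshear B <= pleft A + pshear A /\
  pleft A + pshear A + plen A <= pleft B + pshear B + plen B.
Proof.
  destruct A as [a l s], B as [b L S]; simpl; intros Hl; split.
  - intros H; unfold contained, in_region in H; simpl in H.
    destruct (H a 0 ltac:(lra)) as [_ H1].
    destruct (H (a + l) 0 ltac:(lra)) as [_ H2].
    destruct (H (a + s) 1 ltac:(lra)) as [_ H3].
    destruct (H (a + s + l) 1 ltac:(lra)) as [_ H4].
    lra.
  - intros (h1 & h2 & h3 & h4) x y [Hy Hx]; simpl in *; split; [lra|].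
    assert (0 <= y * ((a + s) - (b + S))) by (apply Rmult_le_pos; lra).
    assert (0 <= (1 - y) * (a - b)) by (apply Rmult_le_pos; lra).
    assert (0 <= y * ((b + S + L) - (a + s + l))) by (apply Rmult_le_pos; lra).
    assert (0 <= (1 - y) * ((b + L) - (a + l))) by (apply Rmult_le_pos; lra).
    cbn; split; lra.
Qed.

Lemma type_geom_snoc T x : type_geom (T ++ [x]) =
  (fst (type_geom T) / 3, snd (type_geom T) + sval x * (fst (type_geom T) / 3)).
Proof.
  unfold type_geom; rewrite fold_left_app; simpl.
  destruct (fold_left _ T (2, 0)) as [L s]; simpl; f_equal; ring.
Qed.

Lemma type_len T : fst (type_geom T) = 2 / 3 ^ length T.
Proof.
  induction T as [|x T IH] using rev_ind; [simpl; field|].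
  rewrite type_geom_snoc, length_app, IH, Nat.add_1_r; simpl.
  field; apply pow_nonzero; lra.
Qed.

Lemma type_len_pos T : 0 < fst (type_geom T).
Proof. rewrite type_len; apply Rdiv_lt_0_compat; [lra | apply pow_lt; lra]. Qed.

(* The offsets at which a child of type [T ++ [x]] fits into [type_at T p]
   form an interval of length [(2 - |sval x|) L / 3 >= L / 3], where [L] is
   the base length of [T]. *)
Lemma leftmost_child_has_neighbour p T x u :
  leftmost (fun t => contained (type_at (T ++ [x]) t) (type_at T p)) u ->
  contained (type_at (T ++ [x]) (u + fst (type_geom T) / 3)) (type_at T p).
Proof.
  intros [H1 H2]; pose proof (type_len_pos T) as HL.
  unfold type_at in *; rewrite type_geom_snoc in *; simpl in *.
  set (L := fst (type_geom T)) in *; set (S := snd (type_geom T)) in *.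
  apply contained_iff_corners in H1; simpl in *; [|lra].
  apply contained_iff_corners; simpl; [lra|].
  assert (Hu : u <= p + match x with SM => L / 3 | _ => 0 end).
  { apply H2, contained_iff_corners; destruct x; simpl in *; lra. }
  destruct x; simpl in *; lra.
Qed.

(** * Finite sums and the box forest *)

Fixpoint nsum {A} (f : A -> nat) (l : list A) : nat :=
  match l with [] => 0 | a :: l => f a + nsum f l end%nat.

Section NatSums.
Context {A : Type}.
Implicit Types (f g : A -> nat) (l : list A).

Lemma nsum_app f l1 l2 : nsum f (l1 ++ l2) = (nsum f l1 + nsum f l2)%nat.
Proof. induction l1; simpl; lia. Qed.

Lemma nsum_ext f g l : (forall x, In x l -> f x = g x) -> nsum f l = nsum g l.
Proof. induction l; simpl; intros H; [easy|]. rewrite H, IHl; auto. Qed.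

Lemma nsum_le f g l : (forall x, In x l -> (f x <= g x)%nat) -> (nsum f l <= nsum g l)%nat.
Proof.
  induction l; simpl; intros H; [lia|].
  specialize (IHl (fun x h => H x (or_intror h))); specialize (H a (or_introl eq_refl)); lia.
Qed.

Lemma nsum_add f g l : nsum (fun x => f x + g x)%nat l = (nsum f l + nsum g l)%nat.
Proof. induction l; simpl; lia. Qed.

Lemma nsum_mul_l f c l : nsum (fun x => c * f x)%nat l = (c * nsum f l)%nat.
Proof. induction l; simpl; lia. Qed.

Lemma nsum_const c l : nsum (fun _ => c) l = (c * length l)%nat.
Proof. induction l; simpl; lia. Qed.

Lemma nsum_zero f l : (forall x, In x l -> f x = 0%nat) -> nsum f l = 0%nat.
Proof. intros H; rewrite (nsum_ext f (fun _ => 0%nat)), nsum_const by auto; lia. Qed.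

Lemma nsum_ge_term f l x : In x l -> (f x <= nsum f l)%nat.
Proof.
  induction l as [|a l IH]; simpl; [easy|].
  intros [<-|H]; [lia | specialize (IH H); lia].
Qed.

Lemma nsum_b2n (p : A -> bool) l : nsum (fun x => Nat.b2n (p x)) l = length (filter p l).
Proof. induction l; simpl; [easy|]. destruct (p a); simpl; lia. Qed.

Lemma nsum_map {B} f (g : B -> A) (l : list B) : nsum f (map g l) = nsum (fun x => f (g x)) l.
Proof. induction l; simpl; auto. Qed.

End NatSums.

Lemma nsum_swap {A B} (f : A -> B -> nat) (l : list A) (l' : list B) :
  nsum (fun a => nsum (f a) l') l = nsum (fun b => nsum (fun a => f a b) l) l'.
Proof.
  induction l; simpl; [induction l'; simpl; auto|].
  rewrite IHl; symmetry; apply nsum_add.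
Qed.

Lemma nsum_indicator_le (g : nat -> nat) p l : NoDup l ->
  (nsum (fun i => g i * Nat.b2n (p =? i)) l <= g p)%nat.
Proof.
  induction l as [|a l IH]; simpl; intros Hnd; [lia|].
  inversion Hnd as [|? ? Ha Hl]; subst.
  destruct (Nat.eqb_spec p a) as [->|Hne]; simpl.
  - rewrite nsum_zero; [lia|]. intros x Hx.
    destruct (Nat.eqb_spec a x); subst; [contradiction | simpl; lia].
  - specialize (IH Hl); lia.
Qed.

Definition box_at (bs : list box) (i : nat) : box := nth i bs (mkBox [] 0 None).

Definition box_dim (bs : list box) (i : nat) : nat := length (bty (box_at bs i)).

Definition child_of (b : box) (i : nat) : bool :=
  match bparent b with Some p => p =? i | None => false end.

Definition nchildren (bs : list box) (i : nat) : nat :=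
  nsum (fun c => Nat.b2n (child_of (box_at bs c) i)) (seq 0 (length bs)).

Definition ndim (bs : list box) (j : nat) : nat :=
  nsum (fun i => Nat.b2n (box_dim bs i =? j)) (seq 0 (length bs)).

Lemma box_at_app_lt bs b i : (i < length bs)%nat -> box_at (bs ++ [b]) i = box_at bs i.
Proof. intros; apply app_nth1; auto. Qed.

Lemma box_at_app_last bs b : box_at (bs ++ [b]) (length bs) = b.
Proof. unfold box_at; rewrite app_nth2, Nat.sub_diag by lia; reflexivity. Qed.

Lemma nth_error_box_at bs i B :
  nth_error bs i = Some B -> (i < length bs)%nat /\ B = box_at bs i.
Proof.
  intros H; split.
  - apply nth_error_Some; congruence.
  - symmetry; apply nth_error_nth, H.
Qed.

Lemma nth_error_box_at_lt bs i : (i < length bs)%nat -> nth_error bs i = Some (box_at bs i).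
Proof. apply nth_error_nth'. Qed.

Lemma In_box_at bs c : In c bs -> exists k, (k < length bs)%nat /\ box_at bs k = c.
Proof. apply In_nth. Qed.

Lemma nsum_seq_snoc (f g : nat -> nat) bs (b : box) :
  (forall i, (i < length bs)%nat -> f i = g i) ->
  nsum f (seq 0 (length (bs ++ [b]))) = (nsum g (seq 0 (length bs)) + f (length bs))%nat.
Proof.
  intros H; rewrite length_app, Nat.add_1_r, seq_S, nsum_app; simpl.
  rewrite (nsum_ext f g); [lia|]. intros x Hx; apply in_seq in Hx; apply H; lia.
Qed.

Lemma nchildren_app bs b i :
  nchildren (bs ++ [b]) i = (nchildren bs i + Nat.b2n (child_of b i))%nat.
Proof.
  unfold nchildren; rewrite (nsum_seq_snoc _ (fun c => Nat.b2n (child_of (box_at bs c) i))).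
  - rewrite box_at_app_last; reflexivity.
  - intros; rewrite box_at_app_lt; auto.
Qed.

Lemma ndim_app bs b j :
  ndim (bs ++ [b]) j = (ndim bs j + Nat.b2n (length (bty b) =? j))%nat.
Proof.
  unfold ndim, box_dim.
  rewrite (nsum_seq_snoc _ (fun i => Nat.b2n (length (bty (box_at bs i)) =? j))).
  - rewrite box_at_app_last; reflexivity.
  - intros; rewrite box_at_app_lt; auto.
Qed.

Lemma nchildren_pos bs i c : (c < length bs)%nat -> bparent (box_at bs c) = Some i ->
  (1 <= nchildren bs i)%nat.
Proof.
  intros Hc Hp; unfold nchildren.
  eapply Nat.le_trans; [|apply (nsum_ge_term _ _ c), in_seq; lia].
  unfold child_of; rewrite Hp, Nat.eqb_refl; simpl; lia.
Qed.

Lemma nchildren_one_unique bs i c1 c2 : nchildren bs i = 1%nat ->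
  (c1 < length bs)%nat -> (c2 < length bs)%nat ->
  bparent (box_at bs c1) = Some i -> bparent (box_at bs c2) = Some i -> c1 = c2.
Proof.
  intros H1 Hc1 Hc2 P1 P2; destruct (Nat.eq_dec c1 c2) as [|Hne]; auto; exfalso.
  unfold nchildren in H1; rewrite nsum_b2n in H1.
  assert (Hl : (length [c1; c2] <=
    length (filter (fun c => child_of (box_at bs c) i) (seq 0 (length bs))))%nat).
  { apply NoDup_incl_length.
    - repeat constructor; simpl; intuition.
    - intros x [<-|[<-|[]]]; apply filter_In; (split; [apply in_seq; lia|]);
        unfold child_of; [rewrite P1 | rewrite P2]; apply Nat.eqb_refl. }
  simpl in Hl; lia.
Qed.

(** * Invariants of OnlinePacker *)

Definition parent_ok (bs : list box) (i : nat) : Prop :=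
  match bparent (box_at bs i) with
  | None => bty (box_at bs i) = []
  | Some p => (p < i)%nat /\ (exists x, bty (box_at bs i) = bty (box_at bs p) ++ [x]) /\
              contained (box_region (box_at bs i)) (box_region (box_at bs p))
  end.

Definition first_child_leftmost (bs : list box) (i : nat) : Prop :=
  forall p, bparent (box_at bs i) = Some p ->
  (forall c, (c < i)%nat -> bparent (box_at bs c) <> Some p) ->
  forall t, contained (type_at (bty (box_at bs i)) t) (box_region (box_at bs p)) ->
  bpos (box_at bs i) <= t.

Definition near_empty_child (bs : list box) (T : btype) : Prop :=
  exists p c, (c < length bs)%nat /\ nchildren bs p = 1%nat /\
    bparent (box_at bs c) = Some p /\ bty (box_at bs c) = T.

Definition near_empty_inj (bs : list box) : Prop :=
  forall p1 p2 c1 c2, (c1 < length bs)%nat -> (c2 < length bs)%nat ->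
  nchildren bs p1 = 1%nat -> nchildren bs p2 = 1%nat ->
  bparent (box_at bs c1) = Some p1 -> bparent (box_at bs c2) = Some p2 ->
  bty (box_at bs c1) = bty (box_at bs c2) -> p1 = p2.

(* [ndim bs 0] is the number of basic boxes, each of width 2. *)
Record packing_inv (bs : list box) (pl : list (piece * R * nat)) : Prop := {
  inv_parent : forall i, (i < length bs)%nat -> parent_ok bs i;
  inv_first_child : forall i, (i < length bs)%nat -> first_child_leftmost bs i;
  inv_region : forall i x y, (i < length bs)%nat ->
    in_region (box_region (box_at bs i)) x y -> 0 <= x <= 2 * INR (ndim bs 0);
  inv_piece : forall P q i, In (P, q, i) pl -> (i < length bs)%nat /\
    contained (piece_at P q) (box_region (box_at bs i)) /\
    type_area (bty (box_at bs i)) <= 6 * piece_area P /\ nchildren bs i = 0%nat;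
  inv_near_empty : near_empty_inj bs }.

Definition saturated_except (bs : list box) (pl : list (piece * R * nat)) (ex : nat) : Prop :=
  forall j, (j < length bs)%nat -> j <> ex -> (1 <= nchildren bs j)%nat \/ In j (map snd pl).

Definition saturated (bs : list box) (pl : list (piece * R * nat)) : Prop :=
  saturated_except bs pl (length bs).

(* Allocating the chain of boxes [path] below box [i] creates no near-empty
   box whose child type is already that of a near-empty box.  The first new
   box only matters if [i] had no child: otherwise [i] does not become
   near-empty. *)
Definition fresh_path (bs : list box) (i : nat) (path : list sgn) : Prop :=
  forall pre x rest, path = pre ++ x :: rest -> (pre = [] -> nchildren bs i = 0%nat) ->
  ~ near_empty_child bs (bty (box_at bs i) ++ pre ++ [x]).

Section PackingInv.
Variables (bs : list box) (pl : list (piece * R * nat)).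
Hypothesis inv : packing_inv bs pl.

Lemma piece_box_lt j : In j (map snd pl) -> (j < length bs)%nat.
Proof.
  intros Hj; apply in_map_iff in Hj; destruct Hj as [[[P q] j'] [<- Hin]].
  apply (inv_piece _ _ inv _ _ _ Hin).
Qed.

Lemma nchildren_new : nchildren bs (length bs) = 0%nat.
Proof.
  apply nsum_zero; intros c Hc; apply in_seq in Hc.
  pose proof (inv_parent _ _ inv c ltac:(lia)) as H; unfold parent_ok, child_of in *.
  destruct (bparent (box_at bs c)) as [p|]; [|reflexivity].
  destruct (Nat.eqb_spec p (length bs)); simpl; lia.
Qed.

Lemma room_of_near_empty p c : (c < length bs)%nat -> bparent (box_at bs c) = Some p ->
  nchildren bs p = 1%nat -> exists t, child_ok (mkState bs pl) p (bty (box_at bs c)) t.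
Proof.
  intros Hc Hcp Hp1.
  pose proof (inv_parent _ _ inv c Hc) as Hpar; unfold parent_ok in Hpar; rewrite Hcp in Hpar.
  destruct Hpar as (Hlt & [x Hx] & Hcont).
  assert (Honly : forall k, (k < length bs)%nat -> bparent (box_at bs k) = Some p -> k = c)
    by (intros k Hk Hkp; apply (nchildren_one_unique bs p); auto).
  assert (Hleft : leftmost (fun t => contained (type_at (bty (box_at bs p) ++ [x]) t)
                                               (type_at (bty (box_at bs p)) (bpos (box_at bs p))))
                           (bpos (box_at bs c))).
  { unfold box_region in Hcont; rewrite Hx in Hcont; split; [exact Hcont|].
    intros t Ht; rewrite <- Hx in Ht.
    apply (inv_first_child _ _ inv c Hc p Hcp); [|exact Ht].
    intros k Hk Hkp; specialize (Honly k ltac:(lia) Hkp); lia. }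
  exists (bpos (box_at bs c) + fst (type_geom (bty (box_at bs p))) / 3), (box_at bs p).
  split; [apply nth_error_box_at_lt; lia|]; split.
  - rewrite Hx; exact (leftmost_child_has_neighbour _ _ _ _ Hleft).
  - intros b Hb Hbp; simpl in Hb; destruct (In_box_at _ _ Hb) as (k & Hk & <-).
    rewrite (Honly k Hk Hbp); unfold box_region, type_at.
    rewrite Hx, type_geom_snoc; apply int_disjoint_sym, int_disjoint_adjacent.
Qed.

Lemma candidate_of_near_empty_child P T x rest :
  near_empty_child bs (T ++ [x]) -> matches (T ++ x :: rest) P ->
  exists p, candidate (mkState bs pl) P p x rest /\ dim_of (mkState bs pl) p = length T.
Proof.
  intros (p & c & Hc & Hp1 & Hcp & Hty) Hm.
  pose proof (inv_parent _ _ inv c Hc) as Hpar; unfold parent_ok in Hpar; rewrite Hcp in Hpar.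
  destruct Hpar as (Hlt & [y Hy] & _); rewrite Hty in Hy.
  apply app_inj_tail in Hy; destruct Hy as [HT <-]; subst T.
  pose proof (nth_error_box_at_lt bs p ltac:(lia)) as Hn.
  exists p; split.
  - exists (box_at bs p); split; [exact Hn|]; split; [exact Hm|]; split.
    + intros [[[P' q'] j] [Hin Hj]]; simpl in Hj; subst j.
      destruct (inv_piece _ _ inv _ _ _ Hin) as (_ & _ & _ & H0); lia.
    + rewrite <- Hty; eapply room_of_near_empty; eauto.
  - unfold dim_of; simpl; rewrite Hn; reflexivity.
Qed.

End PackingInv.

Lemma parent_ok_app bs b i : (i < length bs)%nat -> parent_ok bs i -> parent_ok (bs ++ [b]) i.
Proof.
  intros Hi H; unfold parent_ok in *; rewrite box_at_app_lt by exact Hi.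
  destruct (bparent (box_at bs i)) as [p|]; [|exact H].
  destruct H as (Hp & Hx & Hc); rewrite box_at_app_lt by lia; auto.
Qed.

Lemma first_child_leftmost_app bs b i : (i < length bs)%nat -> parent_ok bs i ->
  first_child_leftmost bs i -> first_child_leftmost (bs ++ [b]) i.
Proof.
  intros Hi Hpar H p Hp Hfirst t Ht; unfold parent_ok in Hpar.
  rewrite box_at_app_lt in * by exact Hi; rewrite Hp in Hpar.
  rewrite box_at_app_lt in Ht by lia.
  apply (H p Hp); [|exact Ht].
  intros c Hc; rewrite <- (box_at_app_lt bs b c) by lia; apply Hfirst, Hc.
Qed.

Lemma nchildren_app_ge bs b j : (nchildren bs j <= nchildren (bs ++ [b]) j)%nat.
Proof. rewrite nchildren_app; lia. Qed.

Lemma near_empty_child_app bs b T :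
  near_empty_child (bs ++ [b]) T -> T = bty b \/ near_empty_child bs T.
Proof.
  intros (p & c & Hc & Hp1 & Hcp & <-).
  rewrite length_app in Hc; simpl in Hc.
  destruct (Nat.eq_dec c (length bs)) as [->|Hne].
  - left; rewrite box_at_app_last; reflexivity.
  - right; rewrite box_at_app_lt in * by lia.
    exists p, c; repeat split; auto; [lia|].
    rewrite nchildren_app in Hp1; pose proof (nchildren_pos bs p c ltac:(lia) Hcp); lia.
Qed.

Lemma near_empty_inj_app bs b : near_empty_inj bs ->
  (forall p, bparent b = Some p -> nchildren bs p = 0%nat -> ~ near_empty_child bs (bty b)) ->
  near_empty_inj (bs ++ [b]).
Proof.
  intros Hinj Hfresh p1 p2 c1 c2 Hc1 Hc2 H1 H2 Hp1 Hp2 Hty.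
  assert (Hold : forall p c, (c < length bs)%nat -> bparent (box_at bs c) = Some p ->
            nchildren (bs ++ [b]) p = 1%nat -> nchildren bs p = 1%nat).
  { intros p c Hc Hcp; pose proof (nchildren_pos bs p c Hc Hcp); rewrite nchildren_app; lia. }
  assert (Hnew : forall p p' c, (c < length bs)%nat -> bparent b = Some p ->
            nchildren (bs ++ [b]) p = 1%nat -> bparent (box_at bs c) = Some p' ->
            nchildren (bs ++ [b]) p' = 1%nat -> bty (box_at bs c) <> bty b).
  { intros p p' c Hc Hbp Hp Hcp Hp' Heq; apply (Hfresh p Hbp).
    - rewrite nchildren_app in Hp; unfold child_of in Hp.
      rewrite Hbp, Nat.eqb_refl in Hp; simpl in Hp; lia.
    - exists p', c; repeat split; eauto. }
  rewrite length_app in Hc1, Hc2; simpl in Hc1, Hc2.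
  destruct (Nat.eq_dec c1 (length bs)) as [->|Hn1], (Nat.eq_dec c2 (length bs)) as [->|Hn2].
  - congruence.
  - rewrite box_at_app_last in Hp1, Hty; rewrite box_at_app_lt in Hp2, Hty by lia.
    exfalso; apply (Hnew p1 p2 c2); auto; lia.
  - rewrite box_at_app_last in Hp2, Hty; rewrite box_at_app_lt in Hp1, Hty by lia.
    exfalso; apply (Hnew p2 p1 c1); auto; lia.
  - rewrite box_at_app_lt in Hp1, Hp2 by lia.
    rewrite (box_at_app_lt bs b c1), (box_at_app_lt bs b c2) in Hty by lia.
    apply (Hinj p1 p2 c1 c2); auto; [lia | lia | apply (Hold p1 c1) | apply (Hold p2 c2)];
      auto; lia.
Qed.

Lemma inv_app bs pl b : packing_inv bs pl ->
  parent_ok (bs ++ [b]) (length bs) -> first_child_leftmost (bs ++ [b]) (length bs) ->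
  (forall x y, in_region (box_region b) x y -> 0 <= x <= 2 * INR (ndim (bs ++ [b]) 0)) ->
  (forall j, In j (map snd pl) -> nchildren (bs ++ [b]) j = 0%nat) ->
  near_empty_inj (bs ++ [b]) ->
  packing_inv (bs ++ [b]) pl.
Proof.
  intros inv Hpar Hfirst Hreg Hpc Hne.
  assert (Hcase : forall i, (i < length (bs ++ [b]))%nat -> i = length bs \/ (i < length bs)%nat)
    by (intros i; rewrite length_app; simpl; lia).
  constructor; auto.
  - intros i Hi; destruct (Hcase i Hi) as [->|Hi']; auto.
    apply parent_ok_app, (inv_parent _ _ inv); auto.
  - intros i Hi; destruct (Hcase i Hi) as [->|Hi']; auto.
    apply first_child_leftmost_app; [exact Hi' | apply (inv_parent _ _ inv) | apply (inv_first_child _ _ inv)]; auto.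
  - intros i x y Hi Hr; destruct (Hcase i Hi) as [->|Hi'].
    + rewrite box_at_app_last in Hr; exact (Hreg x y Hr).
    + rewrite box_at_app_lt in Hr by exact Hi'.
      destruct (inv_region _ _ inv i x y Hi' Hr); rewrite ndim_app, plus_INR.
      pose proof (pos_INR (Nat.b2n (length (bty b) =? 0))); lra.
  - intros P q i Hin; destruct (inv_piece _ _ inv _ _ _ Hin) as (Hi & H1 & H2 & _).
    rewrite length_app, box_at_app_lt by exact Hi; simpl.
    split; [lia|]; split; [exact H1|]; split; [exact H2|].
    apply Hpc, in_map_iff; exists (P, q, i); auto.
Qed.

Lemma inv_push_child st i x t :
  packing_inv (boxes st) (placed st) -> (i < length (boxes st))%nat ->
  ~ In i (map snd (placed st)) ->
  leftmost (child_ok st i (bty (box_at (boxes st) i) ++ [x])) t ->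
  (nchildren (boxes st) i = 0%nat ->
     ~ near_empty_child (boxes st) (bty (box_at (boxes st) i) ++ [x])) ->
  packing_inv (boxes st ++ [mkBox (bty (box_at (boxes st) i) ++ [x]) t (Some i)]) (placed st).
Proof.
  set (bs := boxes st); set (b := mkBox _ t (Some i)).
  intros inv Hi Hnp [(B & HB & Hcont & _) Hmin] Hfresh.
  apply nth_error_box_at in HB as [_ ->].
  apply inv_app; auto.
  - unfold parent_ok; rewrite box_at_app_last; simpl; rewrite box_at_app_lt by exact Hi.
    split; [exact Hi|]; split; [eexists; reflexivity | exact Hcont].
  - intros p Hp Hfirst t' Ht'; rewrite box_at_app_last in *; simpl in Hp.
    injection Hp as <-; rewrite box_at_app_lt in Ht' by exact Hi.
    apply Hmin; exists (box_at bs i); split; [apply nth_error_box_at_lt, Hi|].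
    split; [exact Ht'|]; intros c Hc Hcp; exfalso.
    destruct (In_box_at _ _ Hc) as (k & Hk & <-).
    apply (Hfirst k Hk); rewrite box_at_app_lt by exact Hk; exact Hcp.
  - intros x0 y0 Hr; rewrite ndim_app; simpl; rewrite length_app, Nat.add_1_r; simpl.
    rewrite Nat.add_0_r; apply (inv_region _ _ inv i x0 y0 Hi), Hcont, Hr.
  - intros j Hj; rewrite nchildren_app; unfold child_of; simpl.
    destruct (Nat.eqb_spec i j) as [<-|_]; [contradiction|].
    apply in_map_iff in Hj; destruct Hj as [[[P q] j'] [Hj' Hin]]; simpl in Hj'; subst j'.
    destruct (inv_piece _ _ inv _ _ _ Hin) as (_ & _ & _ & ->); reflexivity.
  - apply near_empty_inj_app; [exact (inv_near_empty _ _ inv)|].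
    intros p Hp; injection Hp as <-; exact Hfresh.
Qed.

(* The offset [2 * ndim bs 0] lies to the right of every allocated box, so
   the leftmost basic box is placed no further right. *)
Lemma inv_push_root st t :
  packing_inv (boxes st) (placed st) -> leftmost (basic_ok st) t ->
  packing_inv (boxes st ++ [mkBox [] t None]) (placed st).
Proof.
  set (bs := boxes st); intros inv [[Hstrip Hdisj] Hmin].
  assert (Ht0 : 0 <= t) by (apply (Hstrip t 0); unfold in_region, type_at; simpl; lra).
  assert (Ht1 : t <= 2 * INR (ndim bs 0)).
  { pose proof (pos_INR (ndim bs 0)); apply Hmin; split.
    - intros x y Hr; unfold in_region, type_at in Hr; simpl in Hr; lra.
    - intros c Hc x y [Hnew Hold]; destruct (In_box_at _ _ Hc) as (k & Hk & <-).
      apply interior_in_region in Hold.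
      destruct (inv_region _ _ inv k x y Hk Hold).
      unfold in_interior, type_at in Hnew; simpl in Hnew; lra. }
  apply inv_app; auto.
  - unfold parent_ok; rewrite box_at_app_last; reflexivity.
  - intros p Hp; rewrite box_at_app_last in Hp; discriminate.
  - intros x y Hr; rewrite ndim_app, plus_INR; simpl.
    unfold in_region, box_region, type_at in Hr; simpl in Hr; lra.
  - intros j Hj; rewrite nchildren_app; simpl.
    apply in_map_iff in Hj; destruct Hj as [[[P q] j'] [Hj' Hin]]; simpl in Hj'; subst j'.
    destruct (inv_piece _ _ inv _ _ _ Hin) as (_ & _ & _ & ->); reflexivity.
  - apply near_empty_inj_app; [exact (inv_near_empty _ _ inv) | discriminate].
Qed.

Lemma inv_push_piece bs pl P q i : packing_inv bs pl -> (i < length bs)%nat ->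
  contained (piece_at P q) (box_region (box_at bs i)) ->
  type_area (bty (box_at bs i)) <= 6 * piece_area P -> nchildren bs i = 0%nat ->
  packing_inv bs (pl ++ [(P, q, i)]).
Proof.
  intros [H1 H2 H3 H4 H5] Hi Hc Ha H0; constructor; auto.
  intros P' q' i' Hin; apply in_app_or in Hin as [Hin|[Hin|[]]]; auto.
  injection Hin as <- <- <-; auto.
Qed.

Lemma saturated_push_child bs pl i b : (i < length bs)%nat -> bparent b = Some i ->
  saturated_except bs pl i -> saturated_except (bs ++ [b]) pl (length bs).
Proof.
  intros Hi Hb Hsat j Hj Hne; rewrite length_app in Hj; simpl in Hj.
  pose proof (nchildren_app_ge bs b j).
  destruct (Nat.eq_dec j i) as [->|Hji].
  - left; rewrite nchildren_app; unfold child_of; rewrite Hb, Nat.eqb_refl; simpl; lia.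
  - destruct (Hsat j ltac:(lia) Hji) as [Hch|Hpc]; [left; lia | right; exact Hpc].
Qed.

Lemma saturated_push_root bs pl b :
  saturated bs pl -> saturated_except (bs ++ [b]) pl (length bs).
Proof.
  intros Hsat j Hj Hne; rewrite length_app in Hj; simpl in Hj.
  pose proof (nchildren_app_ge bs b j).
  destruct (Hsat j ltac:(lia) Hne) as [Hch|Hpc]; [left; lia | right; exact Hpc].
Qed.

Lemma saturated_push_piece bs pl P q i :
  saturated_except bs pl i -> saturated bs (pl ++ [(P, q, i)]).
Proof.
  intros Hsat j Hj _; rewrite map_app, in_app_iff; simpl.
  destruct (Nat.eq_dec j i) as [->|Hne]; [auto|].
  destruct (Hsat j Hj Hne); auto.
Qed.

Lemma fresh_path_push_child bs i x xs t : fresh_path bs i (x :: xs) ->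
  fresh_path (bs ++ [mkBox (bty (box_at bs i) ++ [x]) t (Some i)]) (length bs) xs.
Proof.
  intros Hfresh pre x' rest Hxs _ Hne.
  rewrite box_at_app_last in Hne; simpl in Hne.
  apply near_empty_child_app in Hne as [Heq|Hne].
  - simpl in Heq; apply (f_equal (@length sgn)) in Heq; rewrite !length_app in Heq; simpl in Heq; lia.
  - apply (Hfresh (x :: pre) x' rest); [rewrite Hxs; reflexivity | discriminate |].
    rewrite <- app_assoc in Hne; exact Hne.
Qed.

Lemma fresh_path_of_maximal st P i x ys :
  packing_inv (boxes st) (placed st) -> candidate st P i x ys ->
  (forall j y zs, candidate st P j y zs -> (dim_of st j <= dim_of st i)%nat) ->
  (1 <= nchildren (boxes st) i)%nat -> fresh_path (boxes st) i (x :: ys).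
Proof.
  destruct st as [bs pl]; simpl; intros inv (B & HB & Hm & _) Hmax Hch pre x' rest Hpath Hpre Hne.
  destruct pre as [|a pre]; [specialize (Hpre eq_refl); lia|].
  apply nth_error_box_at in HB as [Hi ->].
  rewrite Hpath, app_assoc in Hm; rewrite app_assoc in Hne; simpl in Hm, Hne.
  destruct (candidate_of_near_empty_child _ _ inv _ _ _ _ Hne Hm) as (p & Hc & Hd).
  specialize (Hmax _ _ _ Hc); rewrite Hd, length_app in Hmax.
  unfold dim_of in Hmax; simpl in Hmax; rewrite nth_error_box_at_lt in Hmax by exact Hi.
  simpl in Hmax; lia.
Qed.

Lemma fresh_path_of_no_candidate st P t xs :
  packing_inv (boxes st) (placed st) -> (~ exists j y zs, candidate st P j y zs) ->
  matches xs P -> fresh_path (boxes st ++ [mkBox [] t None]) (length (boxes st)) xs.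
Proof.
  destruct st as [bs pl]; simpl; intros inv Hnone Hm pre x rest Hxs _ Hne.
  rewrite box_at_app_last in Hne; simpl in Hne.
  apply near_empty_child_app in Hne as [Heq|Hne].
  - destruct pre; discriminate.
  - subst xs; destruct (candidate_of_near_empty_child _ _ inv _ _ _ _ Hne Hm) as (p & Hc & _).
    apply Hnone; eauto.
Qed.

Lemma build_preserves st i path P st' : build st i path P st' ->
  packing_inv (boxes st) (placed st) -> (i < length (boxes st))%nat ->
  ~ In i (map snd (placed st)) -> (path = [] -> nchildren (boxes st) i = 0%nat) ->
  saturated_except (boxes st) (placed st) i -> fresh_path (boxes st) i path ->
  matches (bty (box_at (boxes st) i) ++ path) P ->
  packing_inv (boxes st') (placed st') /\ saturated (boxes st') (placed st') /\
  exists q j, placed st' = placed st ++ [(P, q, j)].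
Proof.
  intros H; induction H as [st i B P q HB Hc | st i B x xs P t st' HB Hlm Hb IH];
    intros inv Hi Hnp Hleaf Hsat Hfresh Hm; simpl.
  - apply nth_error_box_at in HB as [_ ->].
    destruct Hm as [_ Harea]; rewrite app_nil_r in Harea.
    split; [|split; [|eauto]].
    + apply inv_push_piece; auto.
    + apply saturated_push_piece, Hsat.
  - apply nth_error_box_at in HB as [_ ->].
    pose proof (nchildren_new _ _ inv) as Hnew.
    apply IH; simpl; clear IH.
    + apply inv_push_child; auto.
      intros H0; apply (Hfresh [] x xs eq_refl (fun _ => H0)).
    + rewrite length_app; simpl; lia.
    + intros Hin; apply (piece_box_lt _ _ inv) in Hin; lia.
    + intros _; rewrite nchildren_app, Hnew; unfold child_of; simpl.
      destruct (Nat.eqb_spec i (length (boxes st))); simpl; lia.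
    + apply (saturated_push_child _ _ i); auto.
    + apply fresh_path_push_child, Hfresh.
    + rewrite box_at_app_last; simpl; rewrite <- app_assoc; exact Hm.
Qed.

Lemma step_preserves st P st' : step st P st' ->
  packing_inv (boxes st) (placed st) -> saturated (boxes st) (placed st) ->
  packing_inv (boxes st') (placed st') /\ saturated (boxes st') (placed st') /\
  exists q j, placed st' = placed st ++ [(P, q, j)].
Proof.
  intros Hstep; destruct Hstep as [st P i x ys st' Hcand Hmax Hb | st P t xs st' Hnone Hlm Hm Hb];
    intros inv Hsat.
  - pose proof Hcand as (B & HB & Hm & Hnp & _).
    apply nth_error_box_at in HB as [Hi ->].
    assert (Hnp' : ~ In i (map snd (placed st))).
    { intros Hin; apply in_map_iff in Hin as (e & He & Hin); apply Hnp; exists e; auto. }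
    assert (Hch : (1 <= nchildren (boxes st) i)%nat)
      by (destruct (Hsat i Hi ltac:(lia)); [assumption | contradiction]).
    apply (build_preserves _ _ _ _ _ Hb); auto.
    + discriminate.
    + intros j Hj _; apply Hsat; auto; lia.
    + eapply fresh_path_of_maximal; eauto.
  - apply (build_preserves _ _ _ _ _ Hb); simpl.
    + apply inv_push_root; auto.
    + rewrite length_app; simpl; lia.
    + intros Hin; apply (piece_box_lt _ _ inv) in Hin; lia.
    + intros _; rewrite nchildren_app, (nchildren_new _ _ inv); reflexivity.
    + apply saturated_push_root, Hsat.
    + apply (fresh_path_of_no_candidate _ P); auto.
    + rewrite box_at_app_last; exact Hm.
Qed.

Lemma runs_preserves Ps st : runs Ps st ->
  packing_inv (boxes st) (placed st) /\ saturated (boxes st) (placed st) /\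
  map (fun e => fst (fst e)) (placed st) = Ps.
Proof.
  induction 1 as [|Ps P st st' _ (inv & Hsat & HPs) Hstep].
  - split; [|split]; [constructor | |]; simpl; try (intros; lia); easy.
  - destruct (step_preserves _ _ _ Hstep inv Hsat) as (inv' & Hsat' & q & j & Hpl).
    split; [|split]; auto.
    rewrite Hpl, map_app, HPs; reflexivity.
Qed.

(** * Counting boxes by dimension *)

Fixpoint all_types (m : nat) : list btype :=
  match m with
  | O => [[]]
  | S m => map (cons SM) (all_types m) ++ map (cons S0) (all_types m) ++
           map (cons Defs.SP) (all_types m)
  end.

Lemma length_all_types m : length (all_types m) = (3 ^ m)%nat.
Proof.
  induction m; [reflexivity|]; cbn [all_types].
  rewrite !length_app, !length_map; unfold btype in IHm; rewrite IHm; simpl; lia.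
Qed.

Lemma in_all_types T : In T (all_types (length T)).
Proof.
  induction T as [|a T IH]; simpl; [auto|].
  rewrite !in_app_iff, !in_map_iff; destruct a; eauto 6.
Qed.

Lemma NoDup_types_length (l : list btype) m : NoDup l ->
  (forall T, In T l -> length T = m) -> (length l <= 3 ^ m)%nat.
Proof.
  intros Hnd H; rewrite <- length_all_types; apply NoDup_incl_length; auto.
  intros T HT; rewrite <- (H T HT); apply in_all_types.
Qed.

Section Counting.
Variables (bs : list box) (pl : list (piece * R * nat)).
Hypotheses (inv : packing_inv bs pl) (sat : saturated bs pl).

Definition near_empty_count (j : nat) : nat :=
  nsum (fun i => Nat.b2n ((box_dim bs i =? j) && (nchildren bs i =? 1))) (seq 0 (length bs)).

Definition leaf_count (j : nat) : nat :=
  nsum (fun i => Nat.b2n ((box_dim bs i =? j) && (nchildren bs i =? 0))) (seq 0 (length bs)).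

Definition child_count (j : nat) : nat :=
  nsum (fun i => Nat.b2n (box_dim bs i =? j) * nchildren bs i)%nat (seq 0 (length bs)).

Definition piece_count (j : nat) : nat :=
  nsum (fun e : piece * R * nat => Nat.b2n (box_dim bs (snd e) =? j)) pl.

Definition piece_count_from (j : nat) : nat :=
  nsum (fun e : piece * R * nat => Nat.b2n (j <=? box_dim bs (snd e))) pl.

Lemma box_dim_child c p : (c < length bs)%nat -> bparent (box_at bs c) = Some p ->
  box_dim bs c = S (box_dim bs p).
Proof.
  intros Hc Hp; pose proof (inv_parent _ _ inv c Hc) as H; unfold parent_ok in H.
  rewrite Hp in H; destruct H as (_ & [x Hx] & _).
  unfold box_dim; rewrite Hx, length_app; simpl; lia.
Qed.

Lemma box_dim_le i : (i < length bs)%nat -> (box_dim bs i <= i)%nat.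
Proof.
  induction i as [i IH] using lt_wf_ind; intros Hi.
  pose proof (inv_parent _ _ inv i Hi) as H; unfold parent_ok in H.
  destruct (bparent (box_at bs i)) as [p|] eqn:Hp.
  - destruct H as [Hlt _]; rewrite (box_dim_child i p Hi Hp).
    specialize (IH p Hlt ltac:(lia)); lia.
  - unfold box_dim; rewrite H; simpl; lia.
Qed.

Lemma child_count_le j : (child_count j <= ndim bs (S j))%nat.
Proof.
  unfold child_count, nchildren, ndim.
  rewrite (nsum_ext _ (fun i => nsum (fun c => Nat.b2n (box_dim bs i =? j) *
             Nat.b2n (child_of (box_at bs c) i)) (seq 0 (length bs)))%nat)
    by (intros; rewrite nsum_mul_l; reflexivity).
  rewrite nsum_swap; apply nsum_le; intros c Hc; apply in_seq in Hc.
  unfold child_of; destruct (bparent (box_at bs c)) as [p|] eqn:Hp.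
  - eapply Nat.le_trans;
      [apply (nsum_indicator_le (fun i => Nat.b2n (box_dim bs i =? j))), seq_NoDup|].
    rewrite (box_dim_child c p ltac:(lia) Hp); simpl.
    destruct (box_dim bs p =? j); simpl; lia.
  - rewrite nsum_zero; [lia | intros; simpl; lia].
Qed.

Lemma leaf_count_le j : (leaf_count j <= piece_count j)%nat.
Proof.
  unfold leaf_count, piece_count; rewrite nsum_b2n.
  rewrite <- (nsum_map (fun i => Nat.b2n (box_dim bs i =? j)) snd), nsum_b2n.
  apply NoDup_incl_length; [apply NoDup_filter, seq_NoDup|].
  intros i Hi; apply filter_In in Hi as [Hi Hb]; apply in_seq in Hi.
  apply andb_prop in Hb as [Hj H0]; apply Nat.eqb_eq in H0.
  apply filter_In; split; [|exact Hj].
  destruct (sat i ltac:(lia) ltac:(lia)) as [H|H]; [lia | exact H].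
Qed.

(* A childless box holds a piece; any other box is near-empty or has at
   least two children. *)
Lemma ndim_recurrence j :
  (2 * ndim bs j <= ndim bs (S j) + near_empty_count j + 2 * piece_count j)%nat.
Proof.
  pose proof (child_count_le j); pose proof (leaf_count_le j).
  enough (2 * ndim bs j <= child_count j + near_empty_count j + 2 * leaf_count j)%nat by lia.
  unfold ndim, child_count, near_empty_count, leaf_count.
  rewrite <- !nsum_mul_l, <- !nsum_add; apply nsum_le; intros i _.
  destruct (box_dim bs i =? j); simpl; [|lia].
  destruct (nchildren bs i) as [|[|k]]; simpl; lia.
Qed.

Lemma piece_count_from_S j : piece_count_from j = (piece_count j + piece_count_from (S j))%nat.
Proof.
  unfold piece_count_from, piece_count; rewrite <- nsum_add; apply nsum_ext; intros e _.
  destruct (Nat.leb_spec j (box_dim bs (snd e))), (Nat.eqb_spec (box_dim bs (snd e)) j),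
    (Nat.leb_spec (S j) (box_dim bs (snd e))); simpl; lia.
Qed.

(* [N_j <= L_j + N_(j+1)], since a box without a piece has a child. *)
Lemma ndim_le_piece_count_from j : (ndim bs j <= piece_count_from j)%nat.
Proof.
  remember (length bs - j)%nat as m eqn:Hm; revert j Hm.
  induction m as [|m IH]; intros j Hm.
  - unfold ndim; rewrite nsum_zero; [lia|]; intros i Hi; apply in_seq in Hi.
    pose proof (box_dim_le i ltac:(lia)); destruct (Nat.eqb_spec (box_dim bs i) j); simpl; lia.
  - specialize (IH (S j) ltac:(lia)); rewrite piece_count_from_S.
    pose proof (child_count_le j); pose proof (leaf_count_le j).
    enough (ndim bs j <= child_count j + leaf_count j)%nat by lia.
    unfold ndim, child_count, leaf_count; rewrite <- nsum_add; apply nsum_le; intros i _.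
    destruct (box_dim bs i =? j); simpl; [|lia].
    destruct (nchildren bs i); simpl; lia.
Qed.

Lemma ndim_le_pieces j : (ndim bs j <= length pl)%nat.
Proof.
  eapply Nat.le_trans; [apply ndim_le_piece_count_from|].
  unfold piece_count_from; rewrite <- (Nat.mul_1_l (length pl)), <- nsum_const.
  apply nsum_le; intros e _; destruct (_ <=? _); simpl; lia.
Qed.

Definition only_child (p : nat) : nat :=
  hd O (filter (fun c => child_of (box_at bs c) p) (seq 0 (length bs))).

Lemma only_child_spec p : nchildren bs p = 1%nat ->
  (only_child p < length bs)%nat /\ bparent (box_at bs (only_child p)) = Some p.
Proof.
  unfold nchildren, only_child; rewrite nsum_b2n; intros H.
  destruct (filter _ _) as [|c [|c' l]] eqn:Hf; simpl in H; try lia; simpl.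
  assert (Hin : In c (filter (fun c => child_of (box_at bs c) p) (seq 0 (length bs))))
    by (rewrite Hf; left; reflexivity).
  apply filter_In in Hin as [Hin Hb]; apply in_seq in Hin; split; [lia|].
  unfold child_of in Hb; destruct (bparent (box_at bs c)) as [p'|]; [|discriminate].
  apply Nat.eqb_eq in Hb; subst; reflexivity.
Qed.

(* Near-empty boxes of dimension [j] have children of pairwise distinct
   types of dimension [j + 1]. *)
Lemma near_empty_count_le j : (near_empty_count j <= 3 ^ S j)%nat.
Proof.
  unfold near_empty_count; rewrite nsum_b2n; set (D := filter _ _).
  assert (HD : forall p, In p D -> box_dim bs p = j /\ nchildren bs p = 1%nat).
  { intros p Hp; apply filter_In in Hp as [_ Hp].
    apply andb_prop in Hp as [H1 H2]; apply Nat.eqb_eq in H1, H2; auto. }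
  rewrite <- (length_map (fun p => bty (box_at bs (only_child p))) D).
  apply NoDup_types_length.
  - apply NoDup_map_NoDup_ForallPairs; [|apply NoDup_filter, seq_NoDup].
    intros a b Ha Hb Hab; apply HD in Ha as [_ Ha], Hb as [_ Hb].
    destruct (only_child_spec a Ha), (only_child_spec b Hb).
    apply (inv_near_empty _ _ inv a b (only_child a) (only_child b)); auto.
  - intros T HT; apply in_map_iff in HT as (p & <- & Hp); apply HD in Hp as [Hd Hp].
    destruct (only_child_spec p Hp) as [Hc Hpar].
    pose proof (box_dim_child _ _ Hc Hpar); unfold box_dim in *; lia.
Qed.

End Counting.

(** * Areas and the recurrence *)

Fixpoint rsum {A} (f : A -> R) (l : list A) : R :=
  match l with [] => 0 | a :: l => f a + rsum f l end.

Lemma rsum_add {A} (f g : A -> R) l : rsum (fun x => f x + g x) l = rsum f l + rsum g l.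
Proof. induction l; simpl; lra. Qed.

Lemma rsum_ext {A} (f g : A -> R) l : (forall x, In x l -> f x = g x) -> rsum f l = rsum g l.
Proof. induction l; simpl; intros H; [easy|]. rewrite H, IHl; auto. Qed.

Lemma rsum_le {A} (f g : A -> R) l : (forall x, In x l -> f x <= g x) -> rsum f l <= rsum g l.
Proof.
  induction l as [|a l IH]; simpl; intros H; [lra|].
  pose proof (H a (or_introl eq_refl)); pose proof (IH (fun x h => H x (or_intror h))); lra.
Qed.

Lemma rsum_nonneg {A} (f : A -> R) l : (forall x, In x l -> 0 <= f x) -> 0 <= rsum f l.
Proof.
  induction l as [|a l IH]; simpl; intros H; [lra|].
  pose proof (H a (or_introl eq_refl)); pose proof (IH (fun x h => H x (or_intror h))); lra.
Qed.

Lemma rsum_mul_l {A} (f : A -> R) c l : c * rsum f l = rsum (fun x => c * f x) l.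
Proof. induction l; simpl; lra. Qed.

Lemma rsum_mul_r {A} (f : A -> R) c l : rsum f l * c = rsum (fun x => f x * c) l.
Proof. induction l; simpl; lra. Qed.

Lemma INR_nsum {A} (f : A -> nat) l : INR (nsum f l) = rsum (fun x => INR (f x)) l.
Proof. induction l; simpl; [reflexivity|]; rewrite plus_INR; f_equal; assumption. Qed.

(* [a = (3/2)^J], [b = 2^J], so that [a * b = 3^J]. *)
Lemma recurrence_step n0 n n' e l A B a b : 0 < a -> 0 < b -> 0 <= A -> 0 <= B ->
  2 * n <= n' + e + 2 * l -> e <= 3 * (a * b) -> l * (2 / (a * b)) <= 6 * A ->
  n0 <= n / b + 3 * (a - 1) + 3 * a * B ->
  n0 <= n' / (2 * b) + 3 * (a * (3 / 2) - 1) + 3 * (a * (3 / 2)) * (B + A).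
Proof.
  intros Ha Hb HA HB Hn He Hl IH.
  assert (Hab : 0 < a * b) by nra.
  assert (Hl' : l <= 3 * a * b * A).
  { apply (Rmult_le_reg_r (2 / (a * b))); [apply Rdiv_lt_0_compat; lra|].
    replace (3 * a * b * A * (2 / (a * b))) with (6 * A) by (field; lra); exact Hl. }
  assert (Hsplit : n / b <= n' / (2 * b) + e / (2 * b) + l / b).
  { replace (n' / (2 * b) + e / (2 * b) + l / b) with ((n' + e + 2 * l) / (2 * b))
      by (field; lra).
    replace (n / b) with (2 * n / (2 * b)) by (field; lra).
    apply Rmult_le_compat_r; [apply Rlt_le, Rinv_0_lt_compat|]; lra. }
  assert (e / (2 * b) <= a * (3 / 2)).
  { apply (Rmult_le_reg_r (2 * b)); [lra|].
    replace (e / (2 * b) * (2 * b)) with e by (field; lra); nra. }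
  assert (l / b <= 3 * a * A).
  { apply (Rmult_le_reg_r b); [lra|].
    replace (l / b * b) with l by (field; lra); nra. }
  nra.
Qed.

Definition piece_weight (e : piece * R * nat) : R := piece_area (fst (fst e)).

Section Areas.
Variables (bs : list box) (pl : list (piece * R * nat)).
Hypotheses (inv : packing_inv bs pl) (sat : saturated bs pl).

Definition area_at (j : nat) : R :=
  rsum (fun e => if box_dim bs (snd e) =? j then piece_weight e else 0) pl.

Definition area_below (J : nat) : R :=
  rsum (fun e => if box_dim bs (snd e) <? J then piece_weight e else 0) pl.

Lemma piece_weight_ge e : In e pl -> 2 / 3 ^ box_dim bs (snd e) <= 6 * piece_weight e.
Proof.
  destruct e as [[P q] i]; intros Hin.
  destruct (inv_piece _ _ inv _ _ _ Hin) as (_ & _ & H & _).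
  unfold type_area in H; rewrite type_len in H; exact H.
Qed.

Lemma piece_weight_pos e : In e pl -> 0 < piece_weight e.
Proof.
  intros Hin; pose proof (piece_weight_ge e Hin).
  assert (0 < 2 / 3 ^ box_dim bs (snd e)) by (apply Rdiv_lt_0_compat; [lra | apply pow_lt; lra]).
  lra.
Qed.

Lemma area_at_nonneg j : 0 <= area_at j.
Proof.
  apply rsum_nonneg; intros e He; pose proof (piece_weight_pos e He); destruct (_ =? _); lra.
Qed.

Lemma area_below_S J : area_below (S J) = area_below J + area_at J.
Proof.
  unfold area_below, area_at; rewrite <- rsum_add; apply rsum_ext; intros e _.
  destruct (Nat.ltb_spec (box_dim bs (snd e)) (S J)), (Nat.ltb_spec (box_dim bs (snd e)) J),
    (Nat.eqb_spec (box_dim bs (snd e)) J); lra || lia.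
Qed.

Lemma area_below_nonneg J : 0 <= area_below J.
Proof. apply rsum_nonneg; intros e He; pose proof (piece_weight_pos e He); destruct (_ <? _); lra. Qed.

Lemma area_below_le J : area_below J <= rsum piece_weight pl.
Proof. apply rsum_le; intros e He; pose proof (piece_weight_pos e He); destruct (_ <? _); lra. Qed.

Lemma piece_count_area j : INR (piece_count bs pl j) * (2 / 3 ^ j) <= 6 * area_at j.
Proof.
  unfold piece_count, area_at; rewrite INR_nsum, rsum_mul_r, rsum_mul_l.
  apply rsum_le; intros e He.
  destruct (Nat.eqb_spec (box_dim bs (snd e)) j) as [<-|]; simpl.
  - pose proof (piece_weight_ge e He); lra.
  - lra.
Qed.

Lemma ndim0_le J : INR (ndim bs 0) <=
  INR (ndim bs J) / 2 ^ J + 3 * ((3 / 2) ^ J - 1) + 3 * (3 / 2) ^ J * area_below J.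
Proof.
  induction J as [|J IH].
  - pose proof (area_below_nonneg 0); simpl; unfold Rdiv; rewrite Rinv_1; lra.
  - pose proof (ndim_recurrence bs pl inv sat J) as Hrec; apply le_INR in Hrec.
    rewrite !plus_INR, !mult_INR in Hrec; change (INR 2) with 2 in Hrec.
    pose proof (near_empty_count_le bs pl inv J) as He; apply le_INR in He.
    rewrite pow_INR in He; change (INR 3) with (1 + 1 + 1) in He.
    assert (H3 : 3 ^ J = (3 / 2) ^ J * 2 ^ J) by (rewrite <- Rpow_mult_distr; f_equal; lra).
    pose proof (piece_count_area J) as Hl; rewrite H3 in Hl.
    rewrite area_below_S; simpl pow.
    replace (3 / 2 * (3 / 2) ^ J) with ((3 / 2) ^ J * (3 / 2)) by ring.
    apply (recurrence_step _ (INR (ndim bs J)) _ (INR (near_empty_count bs J))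
             (INR (piece_count bs pl J))); auto.
    + apply pow_lt; lra.
    + apply pow_lt; lra.
    + apply area_at_nonneg.
    + apply area_below_nonneg.
    + replace (1 + 1 + 1) with 3 in He by lra; rewrite <- H3; exact He.
Qed.

End Areas.

(** * The density bound *)

Lemma fold_Rmax_le l M : 0 <= M -> (forall x, In x l -> x <= M) -> fold_right Rmax 0 l <= M.
Proof. induction l; simpl; intros H0 H; auto; apply Rmax_lub; auto. Qed.

Lemma fold_Rmax_ge l x : In x l -> x <= fold_right Rmax 0 l.
Proof.
  induction l; simpl; [easy|]; intros [<-|H]; [apply Rmax_l|].
  eapply Rle_trans; [apply IHl, H | apply Rmax_r].
Qed.

Section Occupied.
Variable st : state.
Hypothesis inv : packing_inv (boxes st) (placed st).

Lemma occupied_length_le : occupied_length st <= 2 * INR (ndim (boxes st) 0).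
Proof.
  apply fold_Rmax_le; [pose proof (pos_INR (ndim (boxes st) 0)); lra|].
  intros x Hx; apply in_map_iff in Hx as ([[P q] i] & <- & Hin).
  destruct (inv_piece _ _ inv _ _ _ Hin) as (Hi & Hc & _).
  pose proof (piece_weight_pos _ _ inv _ Hin) as Hw; unfold piece_weight, piece_area in Hw; simpl in Hw.
  destruct (rightmost_in_region (piece_at P q)) as [y Hy]; [simpl; lra|].
  apply Hc in Hy; apply (inv_region _ _ inv i _ _ Hi Hy).
Qed.

Lemma occupied_length_pos : placed st <> [] -> 0 < occupied_length st.
Proof.
  intros Hne; assert (exists e, In e (placed st)) as ([[P q] i] & Hin)
    by (destruct (placed st) as [|e l]; [easy | exists e; left; reflexivity]).
  destruct (inv_piece _ _ inv _ _ _ Hin) as (Hi & Hc & _).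
  pose proof (piece_weight_pos _ _ inv _ Hin) as Hw; unfold piece_weight, piece_area in Hw; simpl in Hw.
  assert (Hq : 0 <= q).
  { assert (Hr : in_region (piece_at P q) q 0) by (unfold in_region; simpl; lra).
    apply Hc in Hr; apply (inv_region _ _ inv i _ _ Hi Hr). }
  eapply Rlt_le_trans; [|apply fold_Rmax_ge, in_map_iff; exists (P, q, i); split;
                           [reflexivity | exact Hin]].
  unfold rightmost; simpl; pose proof (Rmax_l 0 (wshear P)); lra.
Qed.

End Occupied.

Lemma ln_2_pos : 0 < ln 2.
Proof. rewrite <- ln_1; apply ln_increasing; lra. Qed.

Lemma log2_ge_1 x : 2 <= x -> 1 <= log2 x.
Proof.
  intros Hx; pose proof ln_2_pos; unfold log2.
  apply (Rmult_le_reg_r (ln 2)); [assumption|].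
  unfold Rdiv; rewrite Rmult_1_l, Rmult_assoc, Rinv_l, Rmult_1_r by lra.
  destruct (Req_dec x 2) as [->|Hne]; [lra|]; left; apply ln_increasing; lra.
Qed.

Lemma log2_3_gt_1 : 1 < log2 3.
Proof.
  pose proof ln_2_pos; unfold log2; apply (Rmult_lt_reg_r (ln 2)); [assumption|].
  unfold Rdiv; rewrite Rmult_1_l, Rmult_assoc, Rinv_l, Rmult_1_r by lra.
  apply ln_increasing; lra.
Qed.

Lemma Rpower_2_log2_3 : Rpower 2 (log2 3 - 1) = 3 / 2.
Proof.
  pose proof ln_2_pos; unfold Rpower, log2.
  replace ((ln 3 / ln 2 - 1) * ln 2) with (ln 3 + - ln 2) by (field; lra).
  rewrite exp_plus, exp_Ropp, !exp_ln by lra; reflexivity.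
Qed.

Lemma pow_3_2_le_Rpower (n J : nat) : (2 ^ J <= n)%nat ->
  (3 / 2) ^ J <= Rpower (INR n) (log2 3 - 1).
Proof.
  intros H; pose proof log2_3_gt_1.
  rewrite <- Rpower_2_log2_3, <- Rpower_pow by (unfold Rpower; apply exp_pos).
  rewrite Rpower_mult, Rmult_comm, <- Rpower_mult, Rpower_pow by lra.
  apply Rle_Rpower_l; [lra|]; split; [apply pow_lt; lra|].
  replace 2 with (INR 2) by reflexivity; rewrite <- pow_INR; apply le_INR, H.
Qed.

Lemma total_area_placed Ps pl : map (fun e : piece * R * nat => fst (fst e)) pl = Ps ->
  rsum piece_weight pl = total_area Ps.
Proof.
  intros <-; unfold total_area; induction pl as [|e pl IH]; simpl; [reflexivity|].
  rewrite IH; reflexivity.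
Qed.

Lemma density_eq Ps st : map (fun e : piece * R * nat => fst (fst e)) (placed st) = Ps ->
  density st = total_area Ps / occupied_length st.
Proof.
  intros HPs; unfold density; rewrite Rmult_1_r, <- (total_area_placed Ps (placed st) HPs).
  f_equal; clear; induction (placed st) as [|[[P q] i] pl IH]; simpl; [|rewrite IH]; reflexivity.
Qed.

Lemma ndim0_le_area Ps st : runs Ps st -> (1 <= length Ps)%nat -> 1 <= total_area Ps ->
  INR (ndim (boxes st) 0) <= 6 * (3 / 2) ^ Nat.log2 (length Ps) * total_area Ps.
Proof.
  intros Hrun Hn HA; destruct (runs_preserves _ _ Hrun) as (inv & sat & HPs).
  destruct (Nat.log2_spec (length Ps)) as [_ HJ]; [lia|].
  set (J := Nat.log2 (length Ps)) in *; set (a := (3 / 2) ^ J).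
  assert (Ha : 1 <= a) by (apply pow_R1_Rle; lra).
  assert (Hb : 0 < 2 ^ J) by (apply pow_lt; lra).
  assert (HNJ : INR (ndim (boxes st) J) / 2 ^ J <= 2).
  { pose proof (ndim_le_pieces _ _ inv sat J) as HN.
    rewrite <- HPs, length_map in HJ; apply le_INR in HN; apply lt_INR in HJ.
    rewrite pow_INR in HJ; change (INR 2) with 2 in HJ; simpl pow in HJ.
    apply (Rmult_le_reg_r (2 ^ J)); [exact Hb|]; unfold Rdiv.
    rewrite Rmult_assoc, Rinv_l by lra; lra. }
  pose proof (ndim0_le _ _ inv sat J) as H0.
  pose proof (area_below_le _ _ inv J) as HB; rewrite (total_area_placed _ _ HPs) in HB.
  pose proof (area_below_nonneg _ _ inv J).
  fold a in H0; nra.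
Qed.

Lemma density_ge Ps st : runs Ps st -> (1 <= length Ps)%nat -> 1 <= total_area Ps ->
  / (12 * Rpower (INR (length Ps)) (log2 3 - 1)) <= density st.
Proof.
  intros Hrun Hn HA; destruct (runs_preserves _ _ Hrun) as (inv & _ & HPs).
  assert (Hne : placed st <> []) by (intros Hpl; rewrite Hpl in HPs; subst Ps; simpl in Hn; lia).
  pose proof (occupied_length_pos _ inv Hne) as Hocc.
  pose proof (occupied_length_le _ inv) as Hocc'.
  pose proof (ndim0_le_area _ _ Hrun Hn HA) as H0.
  pose proof (pow_3_2_le_Rpower (length Ps) _ (proj1 (Nat.log2_spec (length Ps) ltac:(lia)))) as Hpow.
  set (Rn := Rpower (INR (length Ps)) (log2 3 - 1)) in *.
  assert (HRn : 0 < Rn) by (unfold Rn, Rpower; apply exp_pos).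
  rewrite (density_eq _ _ HPs).
  assert (occupied_length st <= 12 * Rn * total_area Ps) by nra.
  apply (Rmult_le_reg_r (occupied_length st * (12 * Rn))); [nra|].
  field_simplify; [nra | lra | lra].
Qed.

Theorem lemma18 :
  exists (c : R) (N : nat), 0 < c /\
    forall (Ps : list piece) (st : state),
      (forall P, In P Ps -> admissible P) ->
      runs Ps st ->
      (N <= length Ps)%nat ->
      1 <= total_area Ps ->
      c * Rpower (INR (length Ps)) (1 - log2 3) / log2 (INR (length Ps))
        <= density st.
Proof.
  exists (1 / 12), 2%nat; split; [lra|].
  (* Admissibility only ensures that some type matches each piece, which a
     run already presupposes. *)
  intros Ps st _ Hrun Hn HA.
  pose proof (density_ge Ps st Hrun ltac:(lia) HA) as Hd.
  assert (Hlog : 1 <= log2 (INR (length Ps))).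
  { apply log2_ge_1; replace 2 with (INR 2) by reflexivity; apply le_INR, Hn. }
  replace (1 - log2 3) with (- (log2 3 - 1)) by ring; rewrite Rpower_Ropp.
  set (Rn := Rpower (INR (length Ps)) (log2 3 - 1)) in *.
  assert (HRn : 0 < / Rn) by (apply Rinv_0_lt_compat; unfold Rn, Rpower; apply exp_pos).
  eapply Rle_trans; [|exact Hd].
  rewrite Rinv_mult; unfold Rdiv.
  assert (0 < / log2 (INR (length Ps)) <= 1).
  { split; [apply Rinv_0_lt_compat; lra|].
    rewrite <- Rinv_1; apply Rinv_le_contravar; lra. }
  nra.
Qed.
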